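(* Suppose $h$ is odd. Then for every $p\in\mathcal P$, if $\mu(p)=\mu_0$ and $D_{\mu(p)}(p)=D_{\mu(p^r)}(p^r)$, then $\mu(p^r)>\mu_0$.
   Context: Let $n,h\ge2$, $N=\{1,\dots,n\}$, $H=\{1,\dots,h\}$, $\mathcal P$ the set of $h$-tuples of linear orders on $N$, $p^r$ the profile obtained by reversing each order; $x>_{p_i}y$ means $x\neq y$ and $p_i$ ranks $x$ above $y$; for an integer $\mu\in(h/2,h]$, $D_\mu(p)=\{x\in N: \forall y,\ |\{i: y>_{p_i}x\}|<\mu\}$; $\mu(p)=\min\{\mu\in\mathbb N\cap(h/2,h]: D_\mu(p)\ne\varnothing\}$; $\mu_0=\lceil(h+1)/2\rceil$. *)

From mathcomp Require Import all_boot.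
Set Implicit Arguments. Unset Strict Implicit. Unset Printing Implicit Defensive.

(* Alternatives N = {1..n} are 'I_n, voters H = {1..h} are 'I_h. *)

(* A (weak, reflexive) linear order on 'I_n: [r x y] means "x is ranked at
   or above y". *)
Definition linear_order (n : nat) (r : rel 'I_n) : Prop :=
  [/\ reflexive r, antisymmetric r, transitive r & total r].

(* A profile: an h-tuple of relations on 'I_n (each required to be a
   linear order in the statement). *)
Definition profile (n h : nat) := 'I_h -> rel 'I_n.

Definition above (n : nat) (r : rel 'I_n) (x y : 'I_n) : bool := (x != y) && r x y.

Definition rev_profile (n h : nat) (p : profile n h) : profile n h :=
  fun i => [rel x y | p i y x].

Definition Dset (n h : nat) (p : profile n h) (mu : nat) : {set 'I_n} :=
  [set x | [forall y, #|[set i : 'I_h | above (p i) y x]| < mu]].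

Definition admissible (h mu : nat) : bool := (h < mu.*2) && (mu <= h).

(* mu(p) = min { mu in N ∩ (h/2, h] | D_mu(p) <> ∅ }, computed as the first
   m in 0, 1, ..., h that is admissible with D_m(p) nonempty (the set is
   nonempty for profiles of linear orders since D_h(p) <> ∅). *)
Definition mu_of (n h : nat) (p : profile n h) : nat :=
  find (fun m => admissible h m && (Dset p m != set0)) (iota 0 h.+1).

(* mu_0 = ceil((h+1)/2) *)
Definition mu0 (h : nat) : nat := (h.+2)./2.

From mathcomp Require Import all_boot.
From mathcomp Require Import zify.

(* A common element x of D_mu(p) and D_mu'(p^r) is compared with any other
   alternative y: reversing the profile swaps the voters preferring y to x
   with those preferring x to y, so the two counts add up to h, and both are
   below their thresholds; hence h + 2 <= mu + mu'.  For odd h, mu_0 is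
   exactly (h + 1) / 2, so mu' <= mu_0 is impossible when mu = mu_0. *)

Lemma double_mu0_odd {h : nat} : odd h -> (mu0 h).*2 = h.+1.
Proof.
by move=> hodd; have := odd_double_half h.+2; rewrite /= hodd /mu0; lia.
Qed.

Lemma Dset_mu_of_neq0 (n h : nat) (p : profile n h) :
  mu_of p <= h -> Dset p (mu_of p) != set0.
Proof.
rewrite /mu_of => mu_le_h; set a := (fun m => _).
have has_a : has a (iota 0 h.+1) by rewrite has_find size_iota ltnS.
have := nth_find 0 has_a.
by rewrite nth_iota ?add0n ?size_iota ?ltnS // => /andP[].
Qed.

Lemma above_rev (n : nat) (r : rel 'I_n) (x y : 'I_n) :
  linear_order r -> y != x -> above [rel a b | r b a] y x = ~~ above r y x.
Proof.
case=> _ r_anti _ r_total yx; rewrite /above /= yx /=.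
have := r_total x y; case rxy: (r x y); case ryx: (r y x) => // _.
by move: yx; rewrite (r_anti y x) ?rxy ?ryx ?eqxx.
Qed.

Lemma card_above_rev_profile {n h : nat} {p : profile n h} {x y : 'I_n} :
  (forall i, linear_order (p i)) -> y != x ->
  #|[set i : 'I_h | above (rev_profile p i) y x]| + #|[set i : 'I_h | above (p i) y x]| = h.
Proof.
move=> p_lin yx.
have -> : [set i | above (rev_profile p i) y x] = ~: [set i | above (p i) y x].
  by apply/setP => i; rewrite !inE above_rev.
by rewrite addnC cardsC card_ord.
Qed.

Lemma exists_neq_ord {n : nat} (x : 'I_n) : 1 < n -> exists y : 'I_n, y != x.
Proof.
move=> n_gt1; have : 0 < #|[set~ x]| by rewrite cardsC1 card_ord; lia.
by case/card_gt0P => y; rewrite !inE; exists y.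
Qed.

Lemma Dset_rev_thresholds {n h : nat} {p : profile n h} {mu mu' : nat}
    {x : 'I_n} :
  1 < n -> (forall i, linear_order (p i)) ->
  x \in Dset p mu -> x \in Dset (rev_profile p) mu' -> h.+2 <= mu + mu'.
Proof.
move=> n_gt1 p_lin; have [y yx] := exists_neq_ord x n_gt1.
rewrite !inE => /forallP /(_ y) lt_mu /forallP /(_ y) lt_mu'.
by have := card_above_rev_profile p_lin yx; lia.
Qed.

Theorem lemma7 (n h : nat) (hn : 2 <= n) (hh : 2 <= h) (hodd : odd h)
  (p : profile n h) (Hp : forall i, linear_order (p i)) :
  mu_of p = mu0 h ->
  Dset p (mu_of p) = Dset (rev_profile p) (mu_of (rev_profile p)) ->
  mu0 h < mu_of (rev_profile p).
Proof.
move=> mu_p D_eq; rewrite ltnNge; apply/negP => mu_rev_le.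
have mu0_h := double_mu0_odd hodd.
have /set0Pn [x x_in] : Dset p (mu_of p) != set0.
  by apply: Dset_mu_of_neq0; rewrite mu_p; lia.
have x_rev : x \in Dset (rev_profile p) (mu_of (rev_profile p)) by rewrite -D_eq.
by have := Dset_rev_thresholds hn Hp x_in x_rev; rewrite mu_p; lia.
Qed.
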